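(* Let $F:\mathcal D\to\mathcal C$ be a braided monoidal functor between braided monoidal categories, let $\mathcal A$ be a $\mathcal C$-monoidal category, and let $\mathfrak A$ be a full subcategory of $\overline{\mathfrak A}(\mathcal C)$ such that the functors $\mathrm{coend}_{\mathcal C}:\mathfrak A\to\mathcal A\text{-coalg}$ and $\mathrm{coend}_{\mathcal D}:\mathfrak A\to\mathcal A\text{-coalg}$ exist (i.e. $\mathrm{coend}_{\mathcal C}(\omega)$ and $\mathrm{coend}_{\mathcal D}(\omega)$ exist for all objects $(\mathcal B,\omega)$ of $\mathfrak A$). Then $\mathrm{coend}_F:\mathrm{coend}_{\mathcal D}\to\mathrm{coend}_{\mathcal C}$, with components $\mathrm{coend}_F(\omega)$, is a natural epimorphism of functors from $\mathfrak A$ to $\mathcal A\text{-coalg}$.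
   Context: $\mathcal K$-categories, $\mathcal K$-functors (with structure $\xi:\omega(X\otimes P)\cong X\otimes\omega(P)$) and $\mathcal K$-morphisms (natural transformations with $\xi'\varphi(X\otimes P)=(1_X\otimes\varphi(P))\xi$) are as usual; $\mathcal A$ $\mathcal C$-monoidal means a monoidal category and $\mathcal C$-category with compatible coherent isomorphisms, so $\omega\otimes M$ is a $\mathcal C$-functor for any $\mathcal C$-functor $\omega$ into $\mathcal A$. Via $F$, $\mathcal C$-categories/functors/morphisms are $\mathcal D$-categories/functors/morphisms. $\overline{\mathfrak A}(\mathcal C)$ has objects pairs $(\mathcal B,\omega)$ with $\mathcal B$ a $\mathcal C$-category and $\omega:\mathcal B\to\mathcal A$ a $\mathcal C$-functor; morphisms $(\mathcal B,\omega)\to(\mathcal B',\omega')$ are equivalence classes $[\chi,\zeta]$ of a $\mathcal C$-functor $\chi:\mathcal B\to\mathcal B'$ and a $\mathcal C$-isomorphism $\zeta:\omega\to\omega'\chi$, where $(\chi,\zeta)\sim(\chi',\zeta')$ if $\zeta'=\omega'\varphi\circ\zeta$ for a $\mathcal C$-isomorphism $\varphi:\chi\to\chi'$; composition $[\chi',\zeta'][\chi,\zeta]=[\chi'\chi,\zeta'\chi\circ\zeta]$. $\mathrm{coend}_{\mathcal K}(\omega)$ represents $M\mapsto\mathrm{Nat}_{\mathcal K}(\omega,\omega\otimes M)$ with universal $\delta$ and induced coalgebra structure; on morphisms $\mathrm{coend}_{\mathcal K}([\chi,\zeta])$ is the unique $z$ with $(\zeta\otimes z)\circ\delta=\delta'\chi\circ\zeta$.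 $\mathrm{coend}_F(\omega)$ is the unique $f$ with $(1_\omega\otimes f)\circ\partial=\delta$ for the universal $\mathcal D$-morphism $\partial$ and universal $\mathcal C$-morphism $\delta$. *)

Set Implicit Arguments.
Unset Strict Implicit.

Record Category := {
  ob :> Type;
  hom : ob -> ob -> Type;
  idm : forall a, hom a a;
  comp : forall a b c, hom b c -> hom a b -> hom a c;
  comp_idl : forall a b (f : hom a b), comp (idm b) f = f;
  comp_idr : forall a b (f : hom a b), comp f (idm a) = f;
  comp_assoc : forall a b c d (f : hom a b) (g : hom b c) (h : hom c d),
      comp h (comp g f) = comp (comp h g) f }.
Arguments hom {_} _ _.
Arguments idm {_} _.
Arguments comp {_ _ _ _} _ _.
Notation "g ∘ f" := (comp g f) (at level 40, left associativity).

Record iso (C : Category) (a b : C) := {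
  fw : hom a b; bw : hom b a;
  fw_bw : fw ∘ bw = idm b; bw_fw : bw ∘ fw = idm a }.
Arguments iso {_} _ _.
Arguments fw {_ _ _} _.
Arguments bw {_ _ _} _.

Definition is_iso {C : Category} {a b : C} (f : hom a b) : Prop :=
  exists g : hom b a, f ∘ g = idm b /\ g ∘ f = idm a.

Record Functor (C D : Category) := {
  fob :> C -> D;
  fmap : forall a b, hom a b -> hom (fob a) (fob b);
  fmap_id : forall a, fmap (idm a) = idm (fob a);
  fmap_comp : forall a b c (f : hom a b) (g : hom b c),
      fmap (g ∘ f) = fmap g ∘ fmap f }.
Arguments fmap {_ _} _ {_ _} _.

Record Bifunctor (A B C : Category) := {
  bob :> A -> B -> C;
  bmap : forall a a' b b', hom a a' -> hom b b' -> hom (bob a b) (bob a' b');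
  bmap_id : forall a b, bmap (idm a) (idm b) = idm (bob a b);
  bmap_comp : forall a a' a'' b b' b'' (f : hom a a') (f' : hom a' a'')
      (g : hom b b') (g' : hom b' b''),
      bmap (f' ∘ f) (g' ∘ g) = bmap f' g' ∘ bmap f g }.
Arguments bmap {_ _ _} _ {_ _ _ _} _ _.

Record MonStr (B : Category) := {
  tens : Bifunctor B B B;
  munit : B;
  assoc : forall a b c, iso (tens (tens a b) c) (tens a (tens b c));
  assoc_nat : forall a a' b b' c c' (f : hom a a') (g : hom b b') (h : hom c c'),
      fw (assoc a' b' c') ∘ bmap tens (bmap tens f g) h
      = bmap tens f (bmap tens g h) ∘ fw (assoc a b c);
  lunit : forall a, iso (tens munit a) a;
  lunit_nat : forall a b (f : hom a b),
      fw (lunit b) ∘ bmap tens (idm munit) f = f ∘ fw (lunit a);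
  runit : forall a, iso (tens a munit) a;
  runit_nat : forall a b (f : hom a b),
      fw (runit b) ∘ bmap tens f (idm munit) = f ∘ fw (runit a);
  pentagon : forall a b c d,
      fw (assoc a b (tens c d)) ∘ fw (assoc (tens a b) c d)
      = bmap tens (idm a) (fw (assoc b c d)) ∘ fw (assoc a (tens b c) d)
        ∘ bmap tens (fw (assoc a b c)) (idm d);
  triangle : forall a b,
      bmap tens (idm a) (fw (lunit b)) ∘ fw (assoc a munit b)
      = bmap tens (fw (runit a)) (idm b) }.
Arguments munit {_} _.
Arguments assoc {_} _ _ _ _.
Arguments lunit {_} _ _.
Arguments runit {_} _ _.

Definition tO {B : Category} (s : MonStr B) (a b : B) : B := tens s a b.
Definition tM {B : Category} (s : MonStr B) {a a' b b' : B}
  (f : hom a a') (g : hom b b') : hom (tO s a b) (tO s a' b') := bmap (tens s) f g.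

Record BrStr (B : Category) (s : MonStr B) := {
  braid : forall a b, iso (tO s a b) (tO s b a);
  braid_nat : forall a a' b b' (f : hom a a') (g : hom b b'),
      fw (braid a' b') ∘ tM s f g = tM s g f ∘ fw (braid a b);
  hexagon1 : forall a b c,
      fw (assoc s b c a) ∘ fw (braid a (tO s b c)) ∘ fw (assoc s a b c)
      = tM s (idm b) (fw (braid a c)) ∘ fw (assoc s b a c)
        ∘ tM s (fw (braid a b)) (idm c);
  hexagon2 : forall a b c,
      bw (assoc s c a b) ∘ fw (braid (tO s a b) c) ∘ bw (assoc s a b c)
      = tM s (fw (braid a c)) (idm b) ∘ bw (assoc s a c b)
        ∘ tM s (idm a) (fw (braid b c)) }.

Record BrMonCat := {
  bcat :> Category;
  bmstr : MonStr bcat;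
  bbr : BrStr bmstr }.

Record BrMonFunctor (D C : BrMonCat) := {
  bfun :> Functor D C;
  mJ : forall a b, iso (tO (bmstr C) (bfun a) (bfun b)) (bfun (tO (bmstr D) a b));
  mJ_nat : forall a a' b b' (f : hom a a') (g : hom b b'),
      fw (mJ a' b') ∘ tM (bmstr C) (fmap bfun f) (fmap bfun g)
      = fmap bfun (tM (bmstr D) f g) ∘ fw (mJ a b);
  mJ0 : iso (munit (bmstr C)) (bfun (munit (bmstr D)));
  mJ_assoc : forall a b c,
      fmap bfun (fw (assoc (bmstr D) a b c)) ∘ fw (mJ (tO (bmstr D) a b) c)
        ∘ tM (bmstr C) (fw (mJ a b)) (idm (bfun c))
      = fw (mJ a (tO (bmstr D) b c)) ∘ tM (bmstr C) (idm (bfun a)) (fw (mJ b c))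
        ∘ fw (assoc (bmstr C) (bfun a) (bfun b) (bfun c));
  mJ_lunit : forall a,
      fmap bfun (fw (lunit (bmstr D) a)) ∘ fw (mJ (munit (bmstr D)) a)
        ∘ tM (bmstr C) (fw mJ0) (idm (bfun a))
      = fw (lunit (bmstr C) (bfun a));
  mJ_runit : forall a,
      fmap bfun (fw (runit (bmstr D) a)) ∘ fw (mJ a (munit (bmstr D)))
        ∘ tM (bmstr C) (idm (bfun a)) (fw mJ0)
      = fw (runit (bmstr C) (bfun a));
  mJ_braid : forall a b,
      fmap bfun (fw (braid (bbr D) a b)) ∘ fw (mJ a b)
      = fw (mJ b a) ∘ fw (braid (bbr C) (bfun a) (bfun b)) }.

Section CCats.
Context {C : Category} (sC : MonStr C).

Record CCatStr (B : Category) := {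
  act : Bifunctor C B B;
  mact : forall X Y P, iso (act (tO sC X Y) P) (act X (act Y P));
  mact_nat : forall X X' Y Y' P P' (f : hom X X') (g : hom Y Y') (h : hom P P'),
      fw (mact X' Y' P') ∘ bmap act (tM sC f g) h
      = bmap act f (bmap act g h) ∘ fw (mact X Y P);
  uact : forall P, iso (act (munit sC) P) P;
  uact_nat : forall P P' (h : hom P P'),
      fw (uact P') ∘ bmap act (idm (munit sC)) h = h ∘ fw (uact P);
  mact_pentagon : forall X Y Z P,
      fw (mact X Y (act Z P)) ∘ fw (mact (tO sC X Y) Z P)
      = bmap act (idm X) (fw (mact Y Z P)) ∘ fw (mact X (tO sC Y Z) P)
        ∘ bmap act (fw (assoc sC X Y Z)) (idm P);
  mact_triangle : forall X P,
      bmap act (idm X) (fw (uact P)) ∘ fw (mact X (munit sC) P)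
      = bmap act (fw (runit sC X)) (idm P) }.

Record CCat := { ccat :> Category; cstr : CCatStr ccat }.
End CCats.
Arguments mact {_ _ _} _ _ _ _.
Arguments uact {_ _ _} _ _.

Definition aO {C : Category} {sC : MonStr C} {B : Category} (s : CCatStr sC B)
  (X : C) (P : B) : B := act s X P.
Definition aM {C : Category} {sC : MonStr C} {B : Category} (s : CCatStr sC B)
  {X X' : C} {P P' : B} (f : hom X X') (h : hom P P') : hom (aO s X P) (aO s X' P')
  := bmap (act s) f h.

Record CFunctor {C : Category} {sC : MonStr C} (B B' : CCat sC) := {
  cfun :> Functor B B';
  xi : forall X P, iso (cfun (aO (cstr B) X P)) (aO (cstr B') X (cfun P));
  xi_nat : forall X X' P P' (f : hom X X') (h : hom P P'),
      fw (xi X' P') ∘ fmap cfun (aM (cstr B) f h)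
      = aM (cstr B') f (fmap cfun h) ∘ fw (xi X P);
  xi_m : forall X Y P,
      aM (cstr B') (idm X) (fw (xi Y P)) ∘ fw (xi X (aO (cstr B) Y P))
        ∘ fmap cfun (fw (mact (cstr B) X Y P))
      = fw (mact (cstr B') X Y (cfun P)) ∘ fw (xi (tO sC X Y) P);
  xi_u : forall P,
      fw (uact (cstr B') (cfun P)) ∘ fw (xi (munit sC) P)
      = fmap cfun (fw (uact (cstr B) P)) }.
Arguments xi {_ _ _ _} _ _ _.

Record CMonoidal {C : Category} (sC : MonStr C) := {
  acat : Category;
  amstr : MonStr acat;
  acstr : CCatStr sC acat;
  cc : forall X P Q, iso (tO amstr (aO acstr X P) Q) (aO acstr X (tO amstr P Q));
  cc_nat : forall X X' P P' Q Q' (f : hom X X') (g : hom P P') (h : hom Q Q'),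
      fw (cc X' P' Q') ∘ tM amstr (aM acstr f g) h
      = aM acstr f (tM amstr g h) ∘ fw (cc X P Q);
  cc_m : forall X Y P Q,
      aM acstr (idm X) (fw (cc Y P Q)) ∘ fw (cc X (aO acstr Y P) Q)
        ∘ tM amstr (fw (mact acstr X Y P)) (idm Q)
      = fw (mact acstr X Y (tO amstr P Q)) ∘ fw (cc (tO sC X Y) P Q);
  cc_u : forall P Q,
      fw (uact acstr (tO amstr P Q)) ∘ fw (cc (munit sC) P Q)
      = tM amstr (fw (uact acstr P)) (idm Q);
  cc_assoc : forall X P Q R,
      fw (cc X P (tO amstr Q R)) ∘ fw (assoc amstr (aO acstr X P) Q R)
      = aM acstr (idm X) (fw (assoc amstr P Q R)) ∘ fw (cc X (tO amstr P Q) R)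
        ∘ tM amstr (fw (cc X P Q)) (idm R);
  cc_runit : forall X P,
      aM acstr (idm X) (fw (runit amstr P)) ∘ fw (cc X P (munit amstr))
      = fw (runit amstr (aO acstr X P)) }.

Definition AsCCat {C : Category} {sC : MonStr C} (A : CMonoidal sC) : CCat sC :=
  {| ccat := acat A; cstr := acstr A |}.

Section Coends.
Context {C : Category} {sC : MonStr C} (A : CMonoidal sC).

Local Notation "a ⊗ b" := (tO (amstr A) a b) (at level 40, left associativity).
Local Notation "f ⊠ g" := (tM (amstr A) f g) (at level 40, left associativity).

Definition is_coalg_map {c c' : acat A}
  (d : hom c (c ⊗ c)) (e : hom c (munit (amstr A)))
  (d' : hom c' (c' ⊗ c')) (e' : hom c' (munit (amstr A))) (g : hom c c') : Prop :=
  (g ⊠ g) ∘ d = d' ∘ g /\ e' ∘ g = e.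

Record Coalg := {
  cob : acat A;
  cDelta : hom cob (cob ⊗ cob);
  cEps : hom cob (munit (amstr A));
  coassoc : fw (assoc (amstr A) cob cob cob) ∘ (cDelta ⊠ idm cob) ∘ cDelta
            = (idm cob ⊠ cDelta) ∘ cDelta;
  counit_l : fw (lunit (amstr A) cob) ∘ (cEps ⊠ idm cob) ∘ cDelta = idm cob;
  counit_r : fw (runit (amstr A) cob) ∘ (idm cob ⊠ cEps) ∘ cDelta = idm cob }.

Record ABarObj := { oB : CCat sC; oω : CFunctor oB (AsCCat A) }.

(* morphism representatives (χ, ζ) of \overline{A}(C) *)
Record ABarMor (o o' : ABarObj) := {
  mχ : CFunctor (oB o) (oB o');
  mζ : forall P : oB o, hom (oω o P) (oω o' (mχ P));
  mζ_nat : forall P P' (h : hom P P'),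
      fmap (oω o') (fmap mχ h) ∘ mζ P = mζ P' ∘ fmap (oω o) h;
  mζ_Cmor : forall (X : C) (P : oB o),
      (fw (xi (oω o') X (mχ P)) ∘ fmap (oω o') (fw (xi mχ X P))) ∘ mζ (aO (cstr (oB o)) X P)
      = aM (acstr A) (idm X) (mζ P) ∘ fw (xi (oω o) X P);
  mζ_iso : forall P, is_iso (mζ P) }.

Section OneObj.
Variable o : ABarObj.
Local Notation B := (oB o).
Local Notation ω := (oω o).

Definition is_nat_tens (M : acat A) (φ : forall P : B, hom (ω P) (ω P ⊗ M)) : Prop :=
  forall (P P' : B) (h : hom P P'), (fmap ω h ⊠ idm M) ∘ φ P = φ P' ∘ fmap ω h.

(* structure isomorphism of the C-functor ω ⊗ M *)
Definition xi_tens (M : acat A) (X : C) (P : B)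
  : hom (ω (aO (cstr B) X P) ⊗ M) (aO (acstr A) X (ω P ⊗ M)) :=
  fw (@cc C sC A X (ω P) M) ∘ (fw (xi ω X P) ⊠ idm M).

(* K-morphism condition, where K acts through G : K -> C
   (G = identity: C-morphisms; G = F: D-morphisms via F) *)
Definition is_Kmor_tens {K : Type} (G : K -> C) (M : acat A)
  (φ : forall P : B, hom (ω P) (ω P ⊗ M)) : Prop :=
  forall (Y : K) (P : B),
    xi_tens M (G Y) P ∘ φ (aO (cstr B) (G Y) P)
    = aM (acstr A) (idm (G Y)) (φ P) ∘ fw (xi ω (G Y) P).

(* coend_K(ω): a representing object of M ↦ Nat_K(ω, ω ⊗ M), with universal δ *)
Record Coend {K : Type} (G : K -> C) := {
  co : acat A;
  cdelta : forall P : B, hom (ω P) (ω P ⊗ co);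
  cdelta_nat : is_nat_tens cdelta;
  cdelta_mor : is_Kmor_tens G cdelta;
  cuniv : forall (M : acat A) (φ : forall P : B, hom (ω P) (ω P ⊗ M)),
      is_nat_tens φ -> is_Kmor_tens G φ ->
      exists! f : hom co M, forall P, (idm (ω P) ⊠ f) ∘ cdelta P = φ P }.

Definition coend_comult {K} {G : K -> C} (E : Coend G) (d : hom (co E) (co E ⊗ co E)) : Prop :=
  forall P, (idm (ω P) ⊠ d) ∘ cdelta E P
            = fw (assoc (amstr A) (ω P) (co E) (co E)) ∘ (cdelta E P ⊠ idm (co E)) ∘ cdelta E P.
Definition coend_counit {K} {G : K -> C} (E : Coend G) (e : hom (co E) (munit (amstr A))) : Prop :=
  forall P, (idm (ω P) ⊠ e) ∘ cdelta E P = bw (runit (amstr A) (ω P)).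

Definition is_coendF {K} {G : K -> C} (EC : Coend (fun X : C => X)) (ED : Coend G)
  (f : hom (co ED) (co EC)) : Prop :=
  forall P, (idm (ω P) ⊠ f) ∘ cdelta ED P = cdelta EC P.
End OneObj.

Definition is_coend_mor {o o' : ABarObj} {K} {G : K -> C}
  (E : Coend o G) (E' : Coend o' G) (m : ABarMor o o') (z : hom (co E) (co E')) : Prop :=
  forall P, (mζ m P ⊠ z) ∘ cdelta E P = cdelta E' (mχ m P) ∘ mζ m P.
End Coends.

(* A morphism g out of a coend is determined by (1 ⊗ g) ∘ δ: this composite is
   again a natural K-morphism, whose factorization through δ is unique.  Since
   δ_C = (1 ⊗ coend_F) ∘ ∂, the coalgebra-map property and the naturality of
   coend_F are checked after composing with ∂, and its epimorphy after
   composing with δ_C; each check only uses the defining equations and the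
   naturality of the associator. *)
From Corelib Require Import ssreflect.
Set Implicit Arguments.

Section TensorCalculus.
Variables (B : Category) (s : MonStr B).

Lemma tM_comp {a a' a'' b b' b'' : B}
    (f : hom a a') (f' : hom a' a'') (g : hom b b') (g' : hom b' b'') :
  tM s (f' ∘ f) (g' ∘ g) = tM s f' g' ∘ tM s f g.
Proof. exact: bmap_comp. Qed.

Lemma tM_id (a b : B) : tM s (idm a) (idm b) = idm (tO s a b).
Proof. exact: bmap_id. Qed.

Lemma tM_idl_comp {a b b' b'' : B} (g : hom b b') (g' : hom b' b'') :
  tM s (idm a) (g' ∘ g) = tM s (idm a) g' ∘ tM s (idm a) g.
Proof. by rewrite -tM_comp comp_idl. Qed.

Lemma tM_splitl {a a' b b' : B} (f : hom a a') (g : hom b b') :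
  tM s f g = tM s f (idm b') ∘ tM s (idm a) g.
Proof. by rewrite -tM_comp comp_idl comp_idr. Qed.

Lemma tM_assoc_nat {a a' b b' c c' : B} (f : hom a a') (g : hom b b') (h : hom c c') :
  fw (assoc s a' b' c') ∘ tM s (tM s f g) h = tM s f (tM s g h) ∘ fw (assoc s a b c).
Proof. exact: assoc_nat. Qed.

Lemma tM_iso_monic {a b c d : B} {z : hom a b} :
  is_iso z -> forall u v : hom c (tO s a d), tM s z (idm d) ∘ u = tM s z (idm d) ∘ v -> u = v.
Proof.
move=> [w [_ wz]] u v zuv.
rewrite -(comp_idl u) -(comp_idl v) -(tM_id a d) -wz -(comp_idl (idm d)) tM_comp.
by rewrite -!comp_assoc zuv.
Qed.

End TensorCalculus.

Lemma aM_comp {C : Category} {sC : MonStr C} {B : Category} (s : CCatStr sC B)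
    {X X' X'' : C} {P P' P'' : B}
    (f : hom X X') (f' : hom X' X'') (h : hom P P') (h' : hom P' P'') :
  aM s (f' ∘ f) (h' ∘ h) = aM s f' h' ∘ aM s f h.
Proof. exact: bmap_comp. Qed.

Lemma aM_id {C : Category} {sC : MonStr C} {B : Category} (s : CCatStr sC B)
    (X : C) (P : B) :
  aM s (idm X) (idm P) = idm (aO s X P).
Proof. exact: bmap_id. Qed.

Section CoendHomExt.
Context {C : Category} {sC : MonStr C} (A : CMonoidal sC) (o : ABarObj A).
Context {K : Type} (G : K -> C).

Local Notation ω := (oω o).
Local Notation "f ⊠ g" := (tM (amstr A) f g) (at level 40, left associativity).

Lemma is_nat_tens_postcomp {M N : acat A} {φ : forall P, hom (ω P) (tO (amstr A) (ω P) M)}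
    (g : hom M N) :
  is_nat_tens φ -> is_nat_tens (fun P => (idm (ω P) ⊠ g) ∘ φ P).
Proof.
move=> φ_nat P P' h /=.
rewrite comp_assoc -tM_comp comp_idl comp_idr.
by rewrite -comp_assoc -φ_nat comp_assoc -tM_comp comp_idl comp_idr.
Qed.

Lemma is_Kmor_tens_postcomp {M N : acat A} {φ : forall P, hom (ω P) (tO (amstr A) (ω P) M)}
    (g : hom M N) :
  is_Kmor_tens G φ -> is_Kmor_tens G (fun P => (idm (ω P) ⊠ g) ∘ φ P).
Proof.
move=> φ_mor Y P; rewrite /xi_tens /=.
set x := fw (xi ω (G Y) P).
have xi_g : (x ⊠ idm N) ∘ (idm _ ⊠ g)
            = (aM (acstr A) (idm (G Y)) (idm (ω P)) ⊠ g) ∘ (x ⊠ idm M).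
  by rewrite -!tM_comp !comp_idl !comp_idr aM_id comp_idl.
rewrite comp_assoc -(comp_assoc (_ ⊠ g)) xi_g comp_assoc cc_nat -!comp_assoc.
by rewrite (comp_assoc _ _ (fw (cc _ _ _))) φ_mor comp_assoc -aM_comp comp_idl.
Qed.

Lemma coend_hom_ext (E : Coend o G) (M : acat A) (g1 g2 : hom (co E) M) :
  (forall P, (idm (ω P) ⊠ g1) ∘ cdelta E P = (idm (ω P) ⊠ g2) ∘ cdelta E P) ->
  g1 = g2.
Proof.
move=> g12.
have [u [_ u_uniq]] := cuniv E (is_nat_tens_postcomp g1 (cdelta_nat E))
                                (is_Kmor_tens_postcomp g1 (cdelta_mor E)).
by rewrite -(u_uniq g1) // (u_uniq g2).
Qed.

End CoendHomExt.

Section CoendF.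
Context {C : Category} {sC : MonStr C} (A : CMonoidal sC) (o : ABarObj A).
Context {K : Type} (G : K -> C) (EC : Coend o (fun X : C => X)) (ED : Coend o G).
Variables (f : hom (co ED) (co EC)) (fP : is_coendF f).

Local Notation ω := (oω o).
Local Notation "f ⊠ g" := (tM (amstr A) f g) (at level 40, left associativity).

Lemma coendF_comult (dC : hom (co EC) (tO (amstr A) (co EC) (co EC)))
    (dD : hom (co ED) (tO (amstr A) (co ED) (co ED))) :
  coend_comult dC -> coend_comult dD -> (f ⊠ f) ∘ dD = dC ∘ f.
Proof.
move=> dCP dDP; apply: (coend_hom_ext ED) => P.
rewrite [in RHS]tM_idl_comp -[in RHS]comp_assoc fP dCP.
rewrite tM_idl_comp -comp_assoc dDP !comp_assoc -tM_assoc_nat.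
rewrite -(comp_assoc (cdelta ED P ⊠ _)) -tM_comp comp_idr fP.
by rewrite (tM_splitl _ (cdelta EC P)) comp_assoc -(comp_assoc (cdelta ED P)) fP.
Qed.

Lemma coendF_counit (eC : hom (co EC) (munit (amstr A))) (eD : hom (co ED) (munit (amstr A))) :
  coend_counit eC -> coend_counit eD -> eC ∘ f = eD.
Proof.
move=> eCP eDP; apply: (coend_hom_ext ED) => P.
by rewrite tM_idl_comp -comp_assoc fP eCP eDP.
Qed.

Lemma coendF_epi (M : acat A) (g g' : hom (co EC) M) : g ∘ f = g' ∘ f -> g = g'.
Proof.
move=> gg'; apply: (coend_hom_ext EC) => P.
by rewrite -!fP !comp_assoc -!tM_idl_comp gg'.
Qed.

End CoendF.

Lemma coendF_natural {C : Category} {sC : MonStr C} (A : CMonoidal sC) (o o' : ABarObj A)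
    {K : Type} (G : K -> C)
    (EC : Coend o (fun X : C => X)) (ED : Coend o G)
    (EC' : Coend o' (fun X : C => X)) (ED' : Coend o' G) (m : ABarMor o o')
    (zC : hom (co EC) (co EC')) (zD : hom (co ED) (co ED'))
    (f : hom (co ED) (co EC)) (f' : hom (co ED') (co EC')) :
  is_coend_mor m zC -> is_coend_mor m zD -> is_coendF f -> is_coendF f' ->
  zC ∘ f = f' ∘ zD.
Proof.
move=> zCP zDP fP f'P; apply: (coend_hom_ext ED) => P.
apply: (tM_iso_monic _ (mζ_iso m P)).
rewrite tM_idl_comp -comp_assoc fP comp_assoc -tM_splitl zCP.
rewrite comp_assoc -tM_comp comp_idl comp_idr.
by rewrite -[in RHS](comp_idl (mζ m P)) tM_comp -comp_assoc zDP comp_assoc f'P.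
Qed.

Theorem theorem5p3
  (D C : BrMonCat) (F : BrMonFunctor D C) (A : CMonoidal (bmstr C))
  (inA : ABarObj A -> Prop)
  (coendC : forall o : ABarObj A, inA o -> Coend o (fun X : C => X))
  (coendD : forall o : ABarObj A, inA o -> Coend o (fob F)) :
  (* each component coend_F(ω) is an epimorphism of A-coalgebras *)
  (forall (o : ABarObj A) (h : inA o) (f : hom (co (coendD o h)) (co (coendC o h))),
     is_coendF (EC := coendC o h) (ED := coendD o h) f ->
     forall dC eC dD eD,
       coend_comult (E := coendC o h) dC -> coend_counit (E := coendC o h) eC ->
       coend_comult (E := coendD o h) dD -> coend_counit (E := coendD o h) eD ->
       is_coalg_map dD eD dC eC f /\
       (forall (X : Coalg A) (g g' : hom (co (coendC o h)) (cob X)),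
          is_coalg_map dC eC (cDelta X) (cEps X) g ->
          is_coalg_map dC eC (cDelta X) (cEps X) g' ->
          g ∘ f = g' ∘ f -> g = g'))
  /\
  (* naturality: coend_C([χ,ζ]) ∘ coend_F(ω) = coend_F(ω') ∘ coend_D([χ,ζ]) *)
  (forall (o o' : ABarObj A) (h : inA o) (h' : inA o') (m : ABarMor o o')
          (zC : hom (co (coendC o h)) (co (coendC o' h')))
          (zD : hom (co (coendD o h)) (co (coendD o' h')))
          (f : hom (co (coendD o h)) (co (coendC o h)))
          (f' : hom (co (coendD o' h')) (co (coendC o' h'))),
     is_coend_mor m zC -> is_coend_mor m zD ->
     is_coendF (EC := coendC o h) (ED := coendD o h) f ->
     is_coendF (EC := coendC o' h') (ED := coendD o' h') f' ->
     zC ∘ f = f' ∘ zD).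
Proof.
split.
- move=> o h f fP dC eC dD eD dCP eCP dDP eDP; split.
    by split; [exact: coendF_comult | exact: coendF_counit].
  by move=> X g g' _ _; apply: coendF_epi.
- by move=> o o' h h' m zC zD f f'; apply: coendF_natural.
Qed.
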